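(* Let $f(k)$ denote the largest power of $2$ dividing $k\in\mathbb{N}_1$, and let $\gamma\in[0,1)$. Then $$\sum_{k=1}^{\infty}\gamma^k f(k)\le\frac{1}{1-\gamma}\left(\frac{1}{e}+\frac{1}{\ln 2}+\frac{1}{2}\log_2\ln 16+\frac{1}{2}\log_2\frac{1}{1-\gamma}\right).$$
   Context: The function $f$ is OEIS A6519: $f(k)=1$ for $k$ odd and $f(k)=2f(k/2)$ for $k$ even. *)

From Stdlib Require Import Reals Lra Lia Arith.
From Coquelicot Require Import Coquelicot.
Open Scope R_scope.

(* OEIS A6519: f(k) = 1 for k odd, f(k) = 2 f(k/2) for k even;
   i.e. the largest power of 2 dividing k (for k >= 1).  Defined via
   fuel-bounded recursion; f 0 = 1 is an irrelevant convention. *)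
Fixpoint f_aux (fuel k : nat) : nat :=
  match fuel with
  | O => 1%nat
  | S fuel' => if Nat.even k then
                 match k with O => 1%nat | _ => (2 * f_aux fuel' (Nat.div2 k))%nat end
               else 1%nat
  end.

Definition a6519 (k : nat) : nat := f_aux k k.

From Stdlib Require Import Reals Lra Lia Arith.
From Coquelicot Require Import Coquelicot.
Open Scope R_scope.

(* Splitting k into odd and even indices gives the functional equation
   S(g) = g/(1-g^2) + 2 S(g^2) for S(g) = sum_k g^k f(k).  Hence any nonnegative
   psi with g/(1-g^2) + 2 psi(g^2) <= psi(g) dominates every partial sum, by
   strong induction on the length.  For g >= 1/e put t = -ln g, so that squaring
   g doubles t; then psi(g) = (3/2 - (log2 t)/2)/t satisfies
   2 psi(g^2) = psi(g) - 1/(2t), and 1/(2t) >= 1/(2 sinh t) = g/(1-g^2).  For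
   g < 1/e the function g/(1-g)^2 works directly.  Finally 1 - g <= t turns psi
   into the stated bound. *)

Lemma f_aux_succ fuel k :
  f_aux (S fuel) k =
  if Nat.even k then match k with O => 1%nat | _ => (2 * f_aux fuel (Nat.div2 k))%nat end
  else 1%nat.
Proof. reflexivity. Qed.

Lemma f_aux_fuel_succ fuel k : (1 <= k <= fuel)%nat -> f_aux (S fuel) k = f_aux fuel k.
Proof.
  revert k; induction fuel as [|fuel IH]; intros k Hk; [lia|].
  rewrite (f_aux_succ (S fuel) k), (f_aux_succ fuel k).
  destruct (Nat.even k) eqn:Hev; [|reflexivity].
  destruct k as [|k]; [reflexivity|].
  f_equal; apply IH.
  pose proof (Nat.div2_odd (S k)) as Hk2.
  rewrite <- Nat.negb_even, Hev in Hk2; cbn [negb Nat.b2n] in Hk2.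
  lia.
Qed.

Lemma f_aux_enough_fuel fuel k : (1 <= k <= fuel)%nat -> f_aux fuel k = a6519 k.
Proof.
  induction fuel as [|fuel IH]; intros Hk; [lia|].
  destruct (Nat.eq_dec k (S fuel)) as [->|Hne]; [reflexivity|].
  rewrite f_aux_fuel_succ by lia; apply IH; lia.
Qed.

Lemma a6519_odd m : a6519 (2 * m + 1) = 1%nat.
Proof.
  unfold a6519; replace (2 * m + 1)%nat with (S (2 * m)) by lia.
  rewrite f_aux_succ, Nat.even_succ, Nat.odd_mul; reflexivity.
Qed.

Lemma a6519_double k : (0 < k)%nat -> a6519 (2 * k) = (2 * a6519 k)%nat.
Proof.
  intros Hk; unfold a6519 at 1.
  destruct k as [|k]; [lia|].
  replace (2 * S k)%nat with (S (S (2 * k))) by lia.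
  rewrite f_aux_succ; cbn [Nat.even Nat.div2].
  rewrite Nat.even_mul, Nat.div2_double; cbn [orb Nat.even].
  f_equal; apply f_aux_enough_fuel; lia.
Qed.

Fixpoint a6519_psum (N : nat) (g : R) : R :=
  match N with
  | O => 0
  | S n => a6519_psum n g + g ^ S n * INR (a6519 (S n))
  end.

Fixpoint odd_pow_psum (M : nat) (g : R) : R :=
  match M with
  | O => 0
  | S m => odd_pow_psum m g + g ^ (2 * m + 1)
  end.

Lemma a6519_psum_double M g :
  a6519_psum (2 * M) g = odd_pow_psum M g + 2 * a6519_psum M (g ^ 2).
Proof.
  induction M as [|M IH]; [simpl; ring|].
  replace (2 * S M)%nat with (S (S (2 * M))) by lia.
  cbn [a6519_psum odd_pow_psum]; rewrite IH.
  replace (S (2 * M)) with (2 * M + 1)%nat by lia.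
  replace (S (2 * M + 1)) with (2 * S M)%nat by lia.
  rewrite a6519_odd, a6519_double, mult_INR, pow_mult by lia; simpl INR; ring.
Qed.

Lemma odd_pow_psum_le M g : 0 <= g < 1 -> odd_pow_psum M g <= g / (1 - g ^ 2).
Proof.
  intros Hg.
  assert (Hclosed : odd_pow_psum M g * (1 - g ^ 2) = g - g ^ (2 * M + 1)).
  { induction M as [|M IH]; cbn [odd_pow_psum]; [simpl; ring|].
    rewrite Rmult_plus_distr_r, IH.
    replace (2 * S M + 1)%nat with (2 * M + 1 + 2)%nat by lia.
    rewrite (pow_add g (2 * M + 1) 2); ring. }
  apply Rle_div_r; [nra|].
  rewrite Hclosed; pose proof (pow_le g (2 * M + 1)); lra.
Qed.

Lemma a6519_psum_mono g N N' : 0 <= g -> (N <= N')%nat -> a6519_psum N g <= a6519_psum N' g.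
Proof.
  intros Hg HN; induction HN as [|N' _ IH]; [lra|].
  cbn [a6519_psum].
  pose proof (pow_le g (S N') Hg); pose proof (pos_INR (a6519 (S N'))); nra.
Qed.

Section Majorant.

Variable psi : R -> R.
Hypothesis psi_ge0 : forall g, 0 <= g < 1 -> 0 <= psi g.
Hypothesis psi_super : forall g, 0 <= g < 1 -> g / (1 - g ^ 2) + 2 * psi (g ^ 2) <= psi g.

Lemma a6519_psum_le_majorant N g : 0 <= g < 1 -> a6519_psum N g <= psi g.
Proof.
  revert g; induction N as [N IH] using (well_founded_induction lt_wf); intros g Hg.
  assert (Hg2 : 0 <= g ^ 2 < 1) by nra.
  pose proof (psi_super g Hg) as Hstep.
  pose proof (psi_ge0 (g ^ 2) Hg2) as Hpsi2.
  destruct N as [|[|N]].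
  - simpl; apply psi_ge0, Hg.
  - assert (Hodd : g <= g / (1 - g ^ 2)) by (apply Rle_div_r; nra).
    simpl; lra.
  - set (M := S (Nat.div2 (S N))).
    assert (HM : (S (S N) <= 2 * M /\ M < S (S N))%nat).
    { unfold M; pose proof (Nat.div2_odd (S N)) as Hdiv.
      destruct (Nat.odd (S N)); cbn [Nat.b2n] in Hdiv; lia. }
    apply Rle_trans with (a6519_psum (2 * M) g); [apply a6519_psum_mono; [lra|lia]|].
    rewrite a6519_psum_double.
    pose proof (odd_pow_psum_le M g Hg); pose proof (IH M (proj2 HM) (g ^ 2) Hg2); lra.
Qed.

End Majorant.

Lemma ln2_bounds : / 2 < ln 2 < 1.
Proof.
  split; [exact ln_lt_2|].
  rewrite <- ln_exp; apply ln_increasing; [lra|].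
  pose proof (exp_ineq1 1 R1_neq_R0); lra.
Qed.

Lemma inv_exp1_bounds : 0 < / exp 1 < / 2.
Proof.
  split; [apply Rinv_0_lt_compat, exp_pos|].
  pose proof (exp_ineq1 1 R1_neq_R0); apply Rinv_lt_contravar; lra.
Qed.

Lemma neg_ln_bounds g : / exp 1 <= g < 1 -> 0 < - ln g <= 1.
Proof.
  intros Hg; pose proof inv_exp1_bounds.
  split.
  - pose proof (ln_increasing g 1) as Hlt; rewrite ln_1 in Hlt; lra.
  - pose proof (ln_le (/ exp 1) g) as Hle.
    rewrite ln_Rinv, ln_exp in Hle by apply exp_pos; lra.
Qed.

Lemma one_le_cosh x : 1 <= cosh x.
Proof.
  unfold cosh; rewrite exp_Ropp.
  pose proof (exp_pos x) as Hx.
  assert (Hsq : exp x + / exp x - 2 = (exp x - 1) ^ 2 / exp x) by (field; lra).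
  assert (0 <= (exp x - 1) ^ 2 / exp x) by (apply Rdiv_le_0_compat; [apply pow2_ge_0 | lra]).
  lra.
Qed.

Lemma self_le_sinh t : 0 <= t -> t <= sinh t.
Proof.
  intros Ht; destruct (Req_dec t 0) as [->|Hne]; [rewrite sinh_0; lra|].
  destruct (MVT_cor2 sinh cosh 0 t) as [c [Hmvt _]];
    [lra | intros; apply derivable_pt_lim_sinh |].
  rewrite sinh_0 in Hmvt; pose proof (one_le_cosh c); nra.
Qed.

Lemma odd_geom_le_inv_neg_ln g : 0 < g < 1 -> g / (1 - g ^ 2) <= / (2 * - ln g).
Proof.
  intros Hg; set (t := - ln g).
  assert (Ht : 0 < t).
  { pose proof (ln_increasing g 1) as Hlt; rewrite ln_1 in Hlt; unfold t; lra. }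
  assert (Hsinh : g / (1 - g ^ 2) = / (2 * sinh t)).
  { unfold sinh, t; rewrite Ropp_involutive, exp_Ropp, exp_ln by lra.
    field; nra. }
  rewrite Hsinh; apply Rinv_le_contravar; [lra|].
  pose proof (self_le_sinh t (Rlt_le _ _ Ht)); lra.
Qed.

Definition log2_majorant (t : R) : R := (3 / 2 - ln t / (2 * ln 2)) / t.

Lemma log2_majorant_double t :
  0 < t -> 2 * log2_majorant (2 * t) = log2_majorant t - / (2 * t).
Proof.
  intros Ht; pose proof ln2_bounds.
  unfold log2_majorant; rewrite ln_mult by lra; field; lra.
Qed.

Lemma log2_majorant_ge t : 0 < t <= 1 -> 3 / 2 / t <= log2_majorant t.
Proof.
  intros Ht; pose proof ln2_bounds.
  assert (ln t <= 0) by (rewrite <- ln_1; apply ln_le; lra).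
  assert (0 <= - ln t / (2 * ln 2)) by (apply Rdiv_le_0_compat; lra).
  unfold log2_majorant, Rdiv; apply Rmult_le_compat_r; [left; apply Rinv_0_lt_compat|]; lra.
Qed.

Lemma log2_majorant_le t u :
  0 < u <= t -> t <= 1 -> log2_majorant t <= / u * (3 / 2 + / 2 * (ln (/ u) / ln 2)).
Proof.
  intros Hut Ht1; pose proof ln2_bounds.
  assert (Hln : 0 <= - ln t <= ln (/ u)).
  { rewrite ln_Rinv by lra.
    pose proof (ln_le u t); pose proof (ln_le t 1); rewrite ln_1 in *; lra. }
  assert (Hnum : 0 <= 3 / 2 - ln t / (2 * ln 2) <= 3 / 2 + / 2 * (ln (/ u) / ln 2)).
  { replace (3 / 2 - ln t / (2 * ln 2)) with (3 / 2 + / 2 * (- ln t / ln 2)) by (field; lra).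
    assert (0 <= - ln t / ln 2 <= ln (/ u) / ln 2).
    { split; [apply Rdiv_le_0_compat | apply Rmult_le_compat_r];
        [| | left; apply Rinv_0_lt_compat |]; lra. }
    lra. }
  unfold log2_majorant, Rdiv at 1; rewrite (Rmult_comm (/ u)).
  apply Rmult_le_compat; try lra.
  - left; apply Rinv_0_lt_compat; lra.
  - apply Rinv_le_contravar; lra.
Qed.

Lemma log2_majorant_super g : 0 <= g < 1 -> / exp 1 <= g ^ 2 ->
  g / (1 - g ^ 2) + 2 * log2_majorant (- ln (g ^ 2)) <= log2_majorant (- ln g).
Proof.
  intros Hg Hg2; pose proof inv_exp1_bounds.
  assert (Ht : 0 < - ln g <= 1) by (apply neg_ln_bounds; nra).
  replace (- ln (g ^ 2)) with (2 * - ln g) by (rewrite ln_pow by nra; simpl INR; ring).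
  rewrite log2_majorant_double by lra.
  pose proof (odd_geom_le_inv_neg_ln g); nra.
Qed.

Lemma log2_majorant_super_crossing g : / exp 1 <= g < 1 -> g ^ 2 < / exp 1 ->
  g / (1 - g ^ 2) + 2 * (g ^ 2 / (1 - g ^ 2) ^ 2) <= log2_majorant (- ln g).
Proof.
  intros Hg Hg2; pose proof inv_exp1_bounds.
  set (t := - ln g).
  assert (Ht : / 2 < t <= 1).
  { pose proof (neg_ln_bounds g Hg).
    pose proof (ln_increasing (g ^ 2) (/ exp 1)) as Hlt.
    rewrite ln_pow, ln_Rinv, ln_exp in Hlt by (apply exp_pos || nra).
    simpl INR in Hlt; unfold t; nra. }
  set (r := g / (1 - g ^ 2)).
  replace (g ^ 2 / (1 - g ^ 2) ^ 2) with (r ^ 2) by (unfold r; field; nra).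
  assert (Hr : 0 <= r <= / (2 * t)).
  { split; [apply Rdiv_le_0_compat; nra | apply odd_geom_le_inv_neg_ln; lra]. }
  assert (Hs : 0 < / t < 2 /\ / (2 * t) = / t / 2).
  { split; [split|]; [apply Rinv_0_lt_compat; lra | | field; lra].
    rewrite <- (Rinv_inv 2); apply Rinv_lt_contravar; lra. }
  pose proof (log2_majorant_ge t ltac:(lra)).
  unfold Rdiv in *; nra.
Qed.

Lemma geom_majorant_super g : 0 <= g < 1 ->
  g / (1 - g ^ 2) + 2 * (g ^ 2 / (1 - g ^ 2) ^ 2) <= g / (1 - g) ^ 2.
Proof.
  intros Hg.
  assert (Hdiff : g / (1 - g) ^ 2 - (g / (1 - g ^ 2) + 2 * (g ^ 2 / (1 - g ^ 2) ^ 2))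
                  = 2 * g ^ 3 / (1 - g ^ 2) ^ 2) by (field; split; nra).
  assert (0 <= 2 * g ^ 3 / (1 - g ^ 2) ^ 2).
  { apply Rdiv_le_0_compat; [pose proof (pow_le g 3) | apply pow_lt]; nra. }
  lra.
Qed.

Definition a6519_majorant (g : R) : R :=
  if Rle_dec (/ exp 1) g then log2_majorant (- ln g) else g / (1 - g) ^ 2.

Lemma a6519_majorant_ge0 g : 0 <= g < 1 -> 0 <= a6519_majorant g.
Proof.
  intros Hg; unfold a6519_majorant; destruct (Rle_dec (/ exp 1) g) as [Hge|_].
  - pose proof (neg_ln_bounds g (conj Hge (proj2 Hg))) as Ht.
    pose proof (log2_majorant_ge (- ln g) Ht).
    assert (0 < 3 / 2 / - ln g) by (apply Rdiv_lt_0_compat; lra); lra.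
  - apply Rdiv_le_0_compat; nra.
Qed.

Lemma a6519_majorant_super g : 0 <= g < 1 ->
  g / (1 - g ^ 2) + 2 * a6519_majorant (g ^ 2) <= a6519_majorant g.
Proof.
  intros Hg; pose proof inv_exp1_bounds.
  unfold a6519_majorant.
  destruct (Rle_dec (/ exp 1) (g ^ 2)) as [Hge2|Hlt2], (Rle_dec (/ exp 1) g) as [Hge|Hlt].
  - apply log2_majorant_super; lra.
  - nra.
  - apply log2_majorant_super_crossing; lra.
  - apply geom_majorant_super; lra.
Qed.

Lemma a6519_majorant_le g : 0 <= g < 1 ->
  a6519_majorant g <= / (1 - g) * (3 / 2 + / 2 * (ln (/ (1 - g)) / ln 2)).
Proof.
  intros Hg; pose proof inv_exp1_bounds; pose proof ln2_bounds.
  unfold a6519_majorant; destruct (Rle_dec (/ exp 1) g) as [Hge|Hlt].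
  - pose proof (neg_ln_bounds g (conj Hge (proj2 Hg))).
    apply log2_majorant_le; [split; [lra|] | lra].
    pose proof (exp_ineq1_le (ln g)) as Hexp; rewrite exp_ln in Hexp; lra.
  - assert (0 <= ln (/ (1 - g)) / ln 2).
    { apply Rdiv_le_0_compat; [|lra].
      rewrite <- ln_1; apply ln_le; [lra|].
      rewrite <- Rinv_1; apply Rinv_le_contravar; lra. }
    replace (g / (1 - g) ^ 2) with (/ (1 - g) * (g / (1 - g))) by (field; lra).
    apply Rmult_le_compat_l; [left; apply Rinv_0_lt_compat; lra|].
    apply Rle_div_l; nra.
Qed.

Lemma three_halves_le_bound_const : 3 / 2 <= / exp 1 + / ln 2 + / 2 * (ln (ln 16) / ln 2).
Proof.
  pose proof inv_exp1_bounds; pose proof ln2_bounds.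
  assert (1 <= / ln 2) by (rewrite <- Rinv_1; apply Rinv_le_contravar; lra).
  assert (Hln16 : ln 16 = 4 * ln 2).
  { replace 16 with (2 ^ 4) by ring; rewrite ln_pow by lra; simpl INR; ring. }
  assert (1 <= ln (ln 16) / ln 2).
  { apply Rle_div_r; [lra|]. rewrite Rmult_1_l, Hln16; apply ln_le; lra. }
  lra.
Qed.

Lemma is_series_le_of_sum_n_le (a : nat -> R) (B : R) :
  (forall n, 0 <= a n) -> (forall n, sum_n a n <= B) ->
  exists s, is_series a s /\ s <= B.
Proof.
  intros Ha HB.
  assert (Hincr : forall n, sum_n a n <= sum_n a (S n)).
  { intro n; rewrite sum_Sn; pose proof (Ha (S n)). unfold plus; simpl; lra. }
  destruct (ex_finite_lim_seq_incr _ _ Hincr HB) as [s Hs].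
  exists s; split; [exact Hs|].
  exact (is_lim_seq_le _ _ _ _ HB Hs (is_lim_seq_const B)).
Qed.

Lemma sum_n_eq_a6519_psum g N :
  sum_n (fun n => g ^ S n * INR (a6519 (S n))) N = a6519_psum (S N) g.
Proof.
  induction N as [|N IH]; [rewrite sum_O; simpl; ring | rewrite sum_Sn, IH; reflexivity].
Qed.

Theorem lemma6 (gamma : R) (Hg0 : 0 <= gamma) (Hg1 : gamma < 1) :
  exists s : R,
    is_series (fun n : nat => gamma ^ (Nat.succ n) * INR (a6519 (Nat.succ n))) s /\
    s <= / (1 - gamma) *
         (/ exp 1 + / ln 2 + / 2 * (ln (ln 16) / ln 2)
          + / 2 * (ln (/ (1 - gamma)) / ln 2)).
Proof.
  apply is_series_le_of_sum_n_le; unfold Nat.succ.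
  - intro n; apply Rmult_le_pos; [apply pow_le; lra | apply pos_INR].
  - intro N; rewrite sum_n_eq_a6519_psum.
    eapply Rle_trans.
    { apply (a6519_psum_le_majorant _ a6519_majorant_ge0 a6519_majorant_super); lra. }
    eapply Rle_trans; [apply a6519_majorant_le; lra|].
    apply Rmult_le_compat_l; [left; apply Rinv_0_lt_compat; lra|].
    pose proof three_halves_le_bound_const; lra.
Qed.
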